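(* Let $p,q$ be positive integers with $\gcd(p,q)=1$, $q$ odd and $2p/q-1\in(-1,1)$. Then \[ \mathcal{O}(2p/q)=\{(-1)^sA\big((4\ell+2p-2s-q)^2/q^2\big):\ s\in\{0,1\},\ \ell\in\mathbb{Z},\ s-p+1\le2\ell\le s-p+q-1\} \] and \[ \mathcal{E}(2p/q)=\{(-1)^sA\big((4\ell-2s-q)^2/q^2\big):\ s\in\{0,1\},\ \ell\in\mathbb{Z},\ s+1\le2\ell\le s+q-1\}. \]
   Context: Nodes: $x_{k,n}:=2k/n-1$, $k=0,\dots,n$; $D_n(x)=\sum_{k=0}^n(-1)^k\frac{1}{x-x_{k,n}}$. $A(y)=\sum_{k=0}^\infty(-1)^k\frac{4k+2}{(2k+1)^2-y}$ for $y\in[0,1)$. A sequence $n_j$ is a strictly increasing map $\mathbb{N}\to\mathbb{N}$, odd (even) if all $n_j$ are odd (even); $x$ is regular for $n_j$ if there is $j_0$ with $x\notin\{x_{0,n_j},\dots,x_{n_j,n_j}\}$ for $j\ge j_0$. For a rational $r$ with $x=r-1\in(-1,1)$, $\mathcal{O}(r)$ is the set of $L\in\overline{\mathbb{R}}=\mathbb{R}\cup\{\pm\infty\}$ such that $\lim_{j\to\infty}D_{n_j}(x)/n_j=L$ for some odd sequence $n_j$ for which $x$ is regular; $\mathcal{E}(r)$ is defined likewise with even sequences. *)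

From Stdlib Require Import Reals ZArith Arith.
From Coquelicot Require Import Coquelicot.
Open Scope R_scope.

Definition node (k n : nat) : R := 2 * INR k / INR n - 1.

Definition Dn (n : nat) (x : R) : R :=
  sum_n (fun k => (-1) ^ k / (x - node k n)) n.

Definition A (y : R) : R :=
  Series (fun k => (-1) ^ k * (4 * INR k + 2) / ((2 * INR k + 1) ^ 2 - y)).

Definition strict_incr (nj : nat -> nat) : Prop :=
  forall i j, (i < j)%nat -> (nj i < nj j)%nat.

Definition regular (x : R) (nj : nat -> nat) : Prop :=
  exists j0 : nat, forall j, (j0 <= j)%nat ->
    forall k, (k <= nj j)%nat -> x <> node k (nj j).

Definition Oset (r : R) (L : Rbar) : Prop :=
  exists nj : nat -> nat, strict_incr nj /\ (forall j, Nat.odd (nj j) = true) /\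
    regular (r - 1) nj /\
    is_lim_seq (fun j => Dn (nj j) (r - 1) / INR (nj j)) L.

Definition Eset (r : R) (L : Rbar) : Prop :=
  exists nj : nat -> nat, strict_incr nj /\ (forall j, Nat.even (nj j) = true) /\
    regular (r - 1) nj /\
    is_lim_seq (fun j => Dn (nj j) (r - 1) / INR (nj j)) L.

(* Write p n = m q + r.  The point x = 2p/q - 1 is a node x_{k,n} iff r = 0, which regularity
   excludes eventually.  Splitting D_n(x) at the last node x_{m,n} to the left of x gives
     D_n(x) / n = (-1)^m (S_m(-u) + S_{n-m-1}(u)),   u = 1 - 2r/q,
   where S_N(v) are the partial sums of sum_i (-1)^i / (2i+1+v); by partial fractions the two
   infinite sums add up to A(u^2).  So along n_j the limit is fixed by the class (r, m mod 2):
   every limit is attained on a subsequence of constant class (pigeonhole), and every class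
   occurring for some n is realised on the progression n + 2qj.  As q is odd, m + r + p n is
   even, and by Bezout every residue r occurs for n of either parity; r = 2l + c - s with
   s = m mod 2 and c = p (n odd) or c = 0 (n even) gives the stated parametrisations. *)

From Stdlib Require Import Reals ZArith Lia ZifyNat Lra Classical IndefiniteDescription.
From Coquelicot Require Import Coquelicot.
Open Scope R_scope.

Definition alt_term (v : R) (i : nat) : R := (-1) ^ i / (2 * INR i + 1 + v).

Lemma ex_series_alt_term (v : R) : -1 < v -> ex_series (alt_term v).
Proof.
  intros Hv.
  assert (Hpos : forall i, 0 < 2 * INR i + 1 + v) by (intros i; pose proof (pos_INR i); lra).
  assert (Hdecr : Un_decreasing (fun i => / (2 * INR i + 1 + v))).
  { intros i. apply Rinv_le_contravar; [apply Hpos|]. rewrite S_INR. lra. }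
  assert (Hlim : Un_cv (fun i => / (2 * INR i + 1 + v)) 0).
  { apply is_lim_seq_Reals.
    replace (Finite 0) with (Rbar_inv p_infty) by reflexivity.
    apply is_lim_seq_inv; [|discriminate].
    apply (is_lim_seq_le_p_loc INR); [|apply is_lim_seq_INR].
    exists 0%nat. intros i _. pose proof (pos_INR i). lra. }
  destruct (alternated_series _ Hdecr Hlim) as [l Hl].
  exists l. apply is_series_Reals. exact Hl.
Qed.

Lemma A_sq_split (u : R) : -1 < u < 1 ->
  A (u ^ 2) = Series (alt_term (- u)) + Series (alt_term u).
Proof.
  intros Hu. unfold A. apply is_series_unique.
  apply is_series_ext with (fun i => plus (alt_term (- u) i) (alt_term u i)).
  - intros i. unfold plus, alt_term; simpl.
    assert (0 < 2 * INR i + 1 - u) by (pose proof (pos_INR i); lra).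
    assert (0 < 2 * INR i + 1 + u) by (pose proof (pos_INR i); lra).
    assert ((2 * INR i + 1) ^ 2 - u ^ 2 <> 0) by nra.
    field. lra.
  - apply (is_series_plus (alt_term (- u)) (alt_term u));
      apply Series_correct, ex_series_alt_term; lra.
Qed.

Lemma is_lim_seq_alt_partial_sums (u : R) (a b : nat -> nat) : -1 < u < 1 ->
  filterlim a eventually eventually -> filterlim b eventually eventually ->
  is_lim_seq (fun j => sum_f_R0 (alt_term (- u)) (a j) + sum_f_R0 (alt_term u) (b j))
    (A (u ^ 2)).
Proof.
  intros Hu Ha Hb. rewrite (A_sq_split u Hu).
  assert (Hpartial : forall v, -1 < v -> is_lim_seq (sum_f_R0 (alt_term v)) (Series (alt_term v))).
  { intros v Hv. apply is_lim_seq_Reals, is_series_Reals, Series_correct, ex_series_alt_term, Hv. }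
  apply is_lim_seq_plus'.
  - apply (is_lim_seq_subseq (sum_f_R0 (alt_term (- u)))); [exact Ha|]. apply Hpartial. lra.
  - apply (is_lim_seq_subseq (sum_f_R0 (alt_term u))); [exact Hb|]. apply Hpartial. lra.
Qed.

Lemma pow_m1_mod2 (m : nat) : (-1) ^ m = (-1) ^ (m mod 2).
Proof.
  rewrite (Nat.div_mod_eq m 2) at 1. rewrite pow_add, pow_1_even. ring.
Qed.

Lemma pow_m1_sub (m i : nat) : (i <= m)%nat -> (-1) ^ (m - i) = (-1) ^ m * (-1) ^ i.
Proof.
  intros Hi. rewrite <- (Nat.sub_add i m Hi) at 2.
  rewrite pow_add, Rmult_assoc, <- pow_add.
  replace (i + i)%nat with (2 * i)%nat by lia. rewrite pow_1_even. ring.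
Qed.

Lemma mul_ne_mul_add (k m q r : nat) : (0 < r < q)%nat -> (k * q <> m * q + r)%nat.
Proof. intros Hr E. destruct (le_lt_dec k m); nia. Qed.

Lemma filterlim_nat_dominated (a b : nat -> nat) (c : nat) : (0 < c)%nat ->
  filterlim a eventually eventually -> (forall j, a j <= c * S (b j))%nat ->
  filterlim b eventually eventually.
Proof.
  intros Hc Ha Hab P [N HN].
  destruct (Ha (fun k => c * S N <= k)%nat) as [J HJ]; [now exists (c * S N)%nat|].
  exists J. intros j Hj. apply HN. specialize (HJ j Hj). specialize (Hab j). nia.
Qed.

Lemma strict_incr_ge (nj : nat -> nat) : strict_incr nj -> forall j, (j <= nj j)%nat.
Proof.
  intros Hinc. induction j as [|j IH]; [lia|]. specialize (Hinc j (S j) (Nat.lt_succ_diag_r j)). lia.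
Qed.

Lemma bounded_seq_recurrent_value (K : nat) (f : nat -> nat) :
  (forall j, f j < K)%nat -> exists c, forall N, exists j, (N <= j)%nat /\ f j = c.
Proof.
  revert f. induction K as [|K IH]; intros f Hf.
  - specialize (Hf 0%nat). lia.
  - destruct (classic (forall N, exists j, (N <= j)%nat /\ f j = K)) as [HK|HK]; [now exists K|].
    apply not_all_ex_not in HK as [N HN].
    destruct (IH (fun j => f (N + j)%nat)) as [c Hc].
    { intros j. specialize (Hf (N + j)%nat).
      assert (f (N + j)%nat <> K) by (intros E; apply HN; exists (N + j)%nat; split; [lia|exact E]).
      lia. }
    exists c. intros M. destruct (Hc M) as [j [Hj E]]. exists (N + j)%nat. split; [lia|exact E].
Qed.

Lemma bounded_seq_const_subseq (K : nat) (f : nat -> nat) : (forall j, f j < K)%nat ->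
  exists c (g : nat -> nat), filterlim g eventually eventually /\ forall k, f (g k) = c.
Proof.
  intros Hf. destruct (bounded_seq_recurrent_value K f Hf) as [c Hc].
  destruct (functional_choice _ Hc) as [g Hg].
  exists c, g. split; [|intros k; apply Hg].
  intros P [N HN]. exists N. intros k Hk. apply HN. specialize (Hg k). lia.
Qed.

Definition parity_limit (b : bool) (x : R) (L : Rbar) : Prop :=
  exists nj : nat -> nat, strict_incr nj /\ (forall j, Nat.odd (nj j) = b) /\
    regular x nj /\ is_lim_seq (fun j => Dn (nj j) x / INR (nj j)) L.

Section Rational_point.

Variables p q : nat.
Hypothesis Hpq : (p < q)%nat.

Local Notation x := (2 * INR p / INR q - 1).

Lemma node_eq_rational (k n : nat) : (0 < n)%nat -> node k n = x <-> (k * q = p * n)%nat.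
Proof.
  intros Hn. unfold node.
  assert (Hqr : INR q <> 0) by (apply not_0_INR; lia).
  assert (Hnr : INR n <> 0) by (apply not_0_INR; lia).
  split; intros H.
  - apply INR_eq. rewrite !mult_INR.
    assert (H2 : 2 * INR k / INR n = 2 * INR p / INR q) by lra.
    field_simplify_eq in H2; [split; assumption|lra].
  - apply (f_equal INR) in H. rewrite !mult_INR in H.
    field_simplify_eq; [lra|split; assumption].
Qed.

Lemma node_gap (k n m r : nat) : (0 < n)%nat -> (p * n = m * q + r)%nat ->
  x - node k n = 2 * ((INR m - INR k) * INR q + INR r) / (INR q * INR n).
Proof.
  intros Hn Heq. unfold node.
  assert (Hqr : INR q <> 0) by (apply not_0_INR; lia).
  assert (Hnr : INR n <> 0) by (apply not_0_INR; lia).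
  apply (f_equal INR) in Heq. rewrite plus_INR, !mult_INR in Heq.
  field_simplify_eq; [|split; assumption].
  replace (INR p) with ((INR m * INR q + INR r) / INR n) by (field_simplify_eq; [lra|exact Hnr]).
  field. exact Hnr.
Qed.

Lemma Dn_term_below (n m r i : nat) : (0 < n)%nat -> (0 < r)%nat ->
  (p * n = m * q + r)%nat -> (i <= m)%nat ->
  (-1) ^ (m - i) / (x - node (m - i) n) / INR n
  = (-1) ^ m * alt_term (- ((INR q - 2 * INR r) / INR q)) i.
Proof.
  intros Hn Hr Heq Hi.
  assert (Hqr : INR q <> 0) by (apply not_0_INR; lia).
  assert (Hnr : INR n <> 0) by (apply not_0_INR; lia).
  assert (Hpos : 0 < INR i * INR q + INR r).
  { assert (0 < INR r) by (apply lt_0_INR; lia).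
    pose proof (pos_INR i); pose proof (pos_INR q). nra. }
  rewrite (node_gap _ _ m r Hn Heq), pow_m1_sub, minus_INR by exact Hi.
  unfold alt_term. field. lra.
Qed.

Lemma Dn_term_above (n m r i : nat) : (0 < n)%nat -> (r < q)%nat ->
  (p * n = m * q + r)%nat ->
  (-1) ^ (S m + i) / (x - node (S m + i) n) / INR n
  = (-1) ^ m * alt_term ((INR q - 2 * INR r) / INR q) i.
Proof.
  intros Hn Hr Heq.
  assert (Hqr : INR q <> 0) by (apply not_0_INR; lia).
  assert (Hnr : INR n <> 0) by (apply not_0_INR; lia).
  assert (Hneg : (INR i + 1) * INR q - INR r > 0).
  { assert (INR r < INR q) by (apply lt_INR; lia).
    pose proof (pos_INR i); pose proof (pos_INR q). nra. }
  rewrite (node_gap _ _ m r Hn Heq), pow_add, plus_INR, S_INR.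
  unfold alt_term. simpl. field. lra.
Qed.

Lemma Dn_div_residue (n m r : nat) : (0 < r < q)%nat -> (p * n = m * q + r)%nat ->
  Dn n x / INR n
  = (-1) ^ m * (sum_f_R0 (alt_term (- ((INR q - 2 * INR r) / INR q))) m
                + sum_f_R0 (alt_term ((INR q - 2 * INR r) / INR q)) (n - S m)).
Proof.
  intros Hr Heq.
  assert (Hmn : (m < n)%nat) by nia.
  unfold Dn. rewrite sum_n_Reals, (tech2 _ m n Hmn), <- sum_f_R0_skip.
  unfold Rdiv at 1. rewrite Rmult_plus_distr_r, Rmult_plus_distr_l, !(Rmult_comm _ (/ INR n)), !scal_sum.
  f_equal; apply sum_eq; intros i Hi.
  - rewrite (Rmult_comm (alt_term _ _)). apply Dn_term_below; lia.
  - rewrite (Rmult_comm (alt_term _ _)). apply Dn_term_above; lia.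
Qed.

Lemma is_lim_Dn_residue_class (r s : nat) (nn mm : nat -> nat) :
  (0 < r < q)%nat -> filterlim nn eventually eventually ->
  (forall j, p * nn j = mm j * q + r)%nat -> (forall j, mm j mod 2 = s) ->
  is_lim_seq (fun j => Dn (nn j) x / INR (nn j))
    ((-1) ^ s * A (((INR q - 2 * INR r) / INR q) ^ 2)).
Proof.
  intros Hr Hnn Heq Hs.
  set (u := (INR q - 2 * INR r) / INR q).
  apply is_lim_seq_ext with
    (fun j => (-1) ^ s * (sum_f_R0 (alt_term (- u)) (mm j)
                         + sum_f_R0 (alt_term u) (nn j - S (mm j)))).
  { intros j. rewrite (Dn_div_residue _ (mm j) r Hr (Heq j)), (pow_m1_mod2 (mm j)), Hs. reflexivity. }
  apply (is_lim_seq_scal_l _ ((-1) ^ s) (Finite (A (u ^ 2)))).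
  assert (Hp : (0 < p)%nat) by (specialize (Heq 0%nat); nia).
  assert (Hmn : forall j, (mm j < nn j)%nat) by (intros j; specialize (Heq j); nia).
  apply is_lim_seq_alt_partial_sums.
  - assert (0 < INR r / INR q < 1).
    { assert (0 < INR r) by (apply lt_0_INR; lia).
      assert (INR r < INR q) by (apply lt_INR; lia).
      split; [apply Rdiv_lt_0_compat | apply (Rdiv_lt_1 (INR r) (INR q))]; lra. }
    replace u with (1 - 2 * (INR r / INR q)) by (unfold u; field; apply not_0_INR; lia).
    lra.
  - apply (filterlim_nat_dominated nn mm q); [lia|exact Hnn|].
    intros j. specialize (Heq j). nia.
  - apply (filterlim_nat_dominated nn (fun j => nn j - S (mm j))%nat q); [lia|exact Hnn|].
    intros j. specialize (Heq j). specialize (Hmn j). nia.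
Qed.

Lemma regular_limit_residue_value (nj : nat -> nat) (L : Rbar) :
  strict_incr nj -> regular x nj -> is_lim_seq (fun j => Dn (nj j) x / INR (nj j)) L ->
  exists j m r, (0 < r < q)%nat /\ (p * nj j = m * q + r)%nat /\
    L = (-1) ^ m * A (((INR q - 2 * INR r) / INR q) ^ 2).
Proof.
  intros Hinc [j0 Hreg] Hlim.
  assert (Hnj : filterlim nj eventually eventually).
  { apply eventually_subseq. intros j. apply Hinc. lia. }
  (* An injective encoding of the class (r, m mod 2) of n_j. *)
  set (cls := fun j => (2 * (p * nj j mod q) + (p * nj j / q) mod 2)%nat).
  destruct (bounded_seq_const_subseq (2 * q) cls) as [c [g [Hg Hcls]]].
  { intros j. unfold cls. pose proof (Nat.mod_upper_bound (p * nj j) q). lia. }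
  destruct (Hg (fun k => S j0 <= k)%nat) as [k0 Hk0]; [now exists (S j0)|].
  specialize (Hk0 k0 (Nat.le_refl _)). pose proof (strict_incr_ge nj Hinc (g k0)).
  set (n := nj (g k0)). set (m := (p * n / q)%nat). set (r := (p * n mod q)%nat).
  assert (Hdiv : forall k, (p * nj k = (p * nj k / q) * q + p * nj k mod q)%nat).
  { intros k. rewrite Nat.mul_comm with (n := (p * nj k / q)%nat). apply Nat.div_mod_eq. }
  assert (Hr : (0 < r < q)%nat).
  { split; [|apply Nat.mod_upper_bound; lia].
    destruct (Nat.eq_0_gt_0_cases r) as [E|]; [exfalso|assumption].
    apply (Hreg (g k0) ltac:(lia) m).
    - specialize (Hdiv (g k0)). fold n m r in Hdiv. nia.
    - symmetry. apply node_eq_rational; [lia|]. specialize (Hdiv (g k0)). fold n m r in Hdiv. lia. }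
  assert (Hclass : forall k, p * nj (g k) mod q = r /\ (p * nj (g k) / q) mod 2 = m mod 2).
  { intros k. pose proof (Hcls k) as Ek. rewrite <- (Hcls k0) in Ek. unfold cls in Ek.
    fold n m r in Ek. lia. }
  exists (g k0), m, r. split; [exact Hr|]. split; [exact (Hdiv (g k0))|].
  assert (Hsub : is_lim_seq (fun k => Dn (nj (g k)) x / INR (nj (g k))) L).
  { exact (is_lim_seq_subseq _ L g Hg Hlim). }
  assert (Hcl : is_lim_seq (fun k => Dn (nj (g k)) x / INR (nj (g k)))
                  ((-1) ^ (m mod 2) * A (((INR q - 2 * INR r) / INR q) ^ 2))).
  { apply (is_lim_Dn_residue_class r (m mod 2) (fun k => nj (g k)) (fun k => p * nj (g k) / q)%nat).
    - exact Hr.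
    - exact (filterlim_comp _ _ _ g nj _ _ _ Hg Hnj).
    - intros k. rewrite <- (proj1 (Hclass k)). apply Hdiv.
    - intros k. apply Hclass. }
  rewrite (pow_m1_mod2 m), <- (is_lim_seq_unique _ _ Hsub). apply is_lim_seq_unique, Hcl.
Qed.

Lemma is_lim_Dn_arith_prog (n m r : nat) : (0 < r < q)%nat -> (p * n = m * q + r)%nat ->
  strict_incr (fun j => n + 2 * q * j)%nat /\ regular x (fun j => n + 2 * q * j)%nat /\
  is_lim_seq (fun j => Dn (n + 2 * q * j) x / INR (n + 2 * q * j))
    ((-1) ^ m * A (((INR q - 2 * INR r) / INR q) ^ 2)).
Proof.
  intros Hr Heq.
  assert (Hprog : forall j, (p * (n + 2 * q * j) = (m + 2 * p * j) * q + r)%nat) by (intros j; nia).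
  split; [|split].
  - intros i j Hij. nia.
  - exists 0%nat. intros j _ k _ E. symmetry in E.
    apply node_eq_rational in E; [|nia].
    rewrite Hprog in E. exact (mul_ne_mul_add _ _ _ _ Hr E).
  - rewrite (pow_m1_mod2 m). apply (is_lim_Dn_residue_class r _ _ (fun j => m + 2 * p * j)%nat Hr).
    + apply eventually_subseq. intros j. nia.
    + exact Hprog.
    + intros j. lia.
Qed.

Lemma parity_limit_residue (b : bool) (L : Rbar) :
  parity_limit b x L <->
  exists n m r, Nat.odd n = b /\ (0 < r < q)%nat /\ (p * n = m * q + r)%nat /\
    L = (-1) ^ m * A (((INR q - 2 * INR r) / INR q) ^ 2).
Proof.
  split.
  - intros [nj [Hinc [Hpar [Hreg Hlim]]]].
    destruct (regular_limit_residue_value nj L Hinc Hreg Hlim) as [j [m [r Hres]]].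
    exists (nj j), m, r. split; [apply Hpar|exact Hres].
  - intros [n [m [r [Hn [Hr [Heq HL]]]]]].
    destruct (is_lim_Dn_arith_prog n m r Hr Heq) as [Hinc [Hreg Hlim]].
    exists (fun j => n + 2 * q * j)%nat. split; [exact Hinc|]. split; [|split; [exact Hreg|]].
    + intros j. rewrite <- Nat.mul_assoc, Nat.odd_add_mul_2. exact Hn.
    + rewrite HL. exact Hlim.
Qed.

End Rational_point.

Lemma Eset_parity_limit (r : R) (L : Rbar) : Eset r L <-> parity_limit false (r - 1) L.
Proof.
  assert (Heven : forall n, Nat.even n = true <-> Nat.odd n = false).
  { intros n. rewrite <- Nat.negb_odd. destruct (Nat.odd n); split; easy. }
  split; intros [nj [Hinc [Hpar Hrest]]]; exists nj;
    (split; [exact Hinc|split; [|exact Hrest]]); intros j; apply Heven, Hpar.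
Qed.

Lemma quotient_parity (p q n m r : nat) : Nat.odd q = true -> (p * n = m * q + r)%nat ->
  ((m + r + if Nat.odd n then p else 0) mod 2 = 0)%nat.
Proof.
  intros Hq Heq. apply Nat.odd_spec in Hq as [c ->].
  destruct (Nat.odd n) eqn:Hn.
  - apply Nat.odd_spec in Hn as [a ->]. lia.
  - rewrite <- Nat.negb_even in Hn. apply Bool.negb_false_iff, Nat.even_spec in Hn as [a ->]. lia.
Qed.

Lemma exists_multiple_residue (p q r : nat) (b : bool) :
  (0 < p)%nat -> Nat.gcd p q = 1%nat -> Nat.odd q = true ->
  exists n m, Nat.odd n = b /\ (p * n = m * q + r)%nat.
Proof.
  intros Hp Hg Hq. destruct (Nat.gcd_bezout_pos p q Hp) as [a [c Hac]]. rewrite Hg in Hac.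
  destruct (Bool.bool_dec (Nat.odd (a * r)) b) as [E|E].
  - exists (a * r)%nat, (c * r)%nat. split; [exact E|nia].
  - exists (a * r + q)%nat, (c * r + p)%nat. split; [|nia].
    rewrite Nat.odd_add, Hq. destruct (Nat.odd (a * r)), b; simpl; congruence.
Qed.

Lemma residue_values_param (p q c : nat) (b : bool) (L : Rbar) :
  (0 < p)%nat -> Nat.gcd p q = 1%nat -> Nat.odd q = true -> c = (if b then p else 0%nat) ->
  (exists n m r, Nat.odd n = b /\ (0 < r < q)%nat /\ (p * n = m * q + r)%nat /\
     L = (-1) ^ m * A (((INR q - 2 * INR r) / INR q) ^ 2)) <->
  (exists (s : nat) (l : Z), (s <= 1)%nat /\
     (Z.of_nat s - Z.of_nat c + 1 <= 2 * l <= Z.of_nat s - Z.of_nat c + Z.of_nat q - 1)%Z /\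
     L = Finite ((-1) ^ s * A ((4 * IZR l + 2 * INR c - 2 * INR s - INR q) ^ 2 / INR q ^ 2))).
Proof.
  intros Hp Hg Hq Hc.
  assert (Hval : forall r s l, (2 * l = Z.of_nat r + Z.of_nat s - Z.of_nat c)%Z ->
    ((INR q - 2 * INR r) / INR q) ^ 2
    = (4 * IZR l + 2 * INR c - 2 * INR s - INR q) ^ 2 / INR q ^ 2).
  { intros r s l Hl. apply (f_equal IZR) in Hl.
    rewrite mult_IZR, minus_IZR, plus_IZR, <- !INR_IZR_INZ in Hl.
    replace (4 * IZR l) with (2 * (2 * IZR l)) by ring. rewrite Hl.
    assert (INR q <> 0) by (apply not_0_INR; intros ->; discriminate).
    field. assumption. }
  split.
  - intros [n [m [r [Hn [Hr [Heq HL]]]]]].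
    pose proof (quotient_parity p q n m r Hq Heq) as Hpar. rewrite Hn, <- Hc in Hpar.
    set (s := (m mod 2)%nat).
    assert (Hs : (s <= 1)%nat) by (unfold s; lia).
    exists s, ((Z.of_nat r + Z.of_nat s - Z.of_nat c) / 2)%Z.
    assert (Hl : (2 * ((Z.of_nat r + Z.of_nat s - Z.of_nat c) / 2)
                  = Z.of_nat r + Z.of_nat s - Z.of_nat c)%Z) by (unfold s; lia).
    split; [exact Hs|]. split; [lia|].
    rewrite HL, (pow_m1_mod2 m), (Hval r s _ Hl). reflexivity.
  - intros [s [l [Hs [Hbound HL]]]].
    set (r := Z.to_nat (2 * l + Z.of_nat c - Z.of_nat s)).
    assert (Hr : Z.of_nat r = (2 * l + Z.of_nat c - Z.of_nat s)%Z) by (unfold r; lia).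
    destruct (exists_multiple_residue p q r b Hp Hg Hq) as [n [m [Hn Heq]]].
    pose proof (quotient_parity p q n m r Hq Heq) as Hpar. rewrite Hn, <- Hc in Hpar.
    exists n, m, r. split; [exact Hn|]. split; [lia|]. split; [exact Heq|].
    rewrite HL, (pow_m1_mod2 m), (Hval r s l) by lia.
    replace (m mod 2)%nat with s by lia. reflexivity.
Qed.

Theorem corollary4 (p q : nat) :
  (0 < p)%nat -> (0 < q)%nat -> Nat.gcd p q = 1%nat -> Nat.odd q = true ->
  -1 < 2 * INR p / INR q - 1 < 1 ->
  (forall L : Rbar, Oset (2 * INR p / INR q) L <->
     exists (s : nat) (l : Z), (s <= 1)%nat /\
       (Z.of_nat s - Z.of_nat p + 1 <= 2 * l <= Z.of_nat s - Z.of_nat p + Z.of_nat q - 1)%Z /\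
       L = Finite ((-1) ^ s *
             A ((4 * IZR l + 2 * INR p - 2 * INR s - INR q) ^ 2 / INR q ^ 2))) /\
  (forall L : Rbar, Eset (2 * INR p / INR q) L <->
     exists (s : nat) (l : Z), (s <= 1)%nat /\
       (Z.of_nat s + 1 <= 2 * l <= Z.of_nat s + Z.of_nat q - 1)%Z /\
       L = Finite ((-1) ^ s *
             A ((4 * IZR l - 2 * INR s - INR q) ^ 2 / INR q ^ 2))).
Proof.
  intros Hp Hq Hg Hqodd [_ Hx].
  assert (Hpq : (p < q)%nat).
  { apply INR_lt. assert (Hq0 : 0 < INR q) by (apply lt_0_INR; exact Hq).
    assert (Hlt : INR p / INR q < 1) by lra. apply Rlt_div_l in Hlt; lra. }
  split; intros L.
  - exact (iff_trans (parity_limit_residue p q Hpq true L)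
             (residue_values_param p q p true L Hp Hg Hqodd eq_refl)).
  - rewrite Eset_parity_limit, (parity_limit_residue p q Hpq),
      (residue_values_param p q 0 false L Hp Hg Hqodd eq_refl).
    cbn [Z.of_nat INR]. setoid_rewrite Z.sub_0_r. setoid_rewrite Rmult_0_r.
    setoid_rewrite Rplus_0_r. reflexivity.
Qed.
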